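(* Let $X$ be a pseudotopological space (resp. an epitopological space) and $m\colon X\times X\to X$ a continuous map. Then the induced map $\mu\colon\pi_0^{\mathrm{ps}}X\times\pi_0^{\mathrm{ps}}X\to\pi_0^{\mathrm{ps}}X$ (resp. $\mu\colon\pi_0^{\mathrm{epi}}X\times\pi_0^{\mathrm{epi}}X\to\pi_0^{\mathrm{epi}}X$), given by $\mu([x],[y])=[m(x,y)]$ where $[\cdot]$ denotes path component, is continuous.
   Context: For a set $X$, $U(X)$ is the set of ultrafilters on $X$, $\dot x$ the principal ultrafilter at $x$; for $f\colon X\to Y$, $f_*\mathscr F=\{S\subset Y:f^{-1}(S)\in\mathscr F\}$. A pseudotopological space is a set $X$ with a relation $u\subset U(X)\times X$ containing all $(\dot x,x)$; write $\mathscr U\to x$; for a filter $\mathscr F$, $\mathscr F\to x$ means every ultrafilter containing $\mathscr F$ converges to $x$. Continuous maps: $\mathscr U\to x\Rightarrow f_*\mathscr U\to f(x)$. Products carry the initial structure: $\mathscr U\to (x_j)$ iff $(p_j)_*\mathscr U\to x_j$ for all projections $p_j$. Final structure for $q\colon X\to Z$: $\mathscr U\to z$ iff $\mathscr U=\dot z$ or $\mathscr U=q_*\mathscr V$, $z=q(x)$ with $\mathscr V\to x$. Topological spaces are regarded as pseudotopological via ultrafilter convergence. For pseudotopological $X,Y$, $Y^X$ is the set of continuous maps with: a filter $\mathscr F\to f$ iff for every filter $\mathscr G\to x$ in $X$, $\mathrm{ev}_*(\mathscr F\times\mathscr G)\to f(x)$. A pseudotopological space is epitopological if its structure is initial w.r.t.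 some family of maps $X\to Z_j^{Y_j}$ with $Y_j,Z_j$ topological; products of epitopological spaces (in the category of epitopological spaces) are their products as pseudotopological spaces. A path is a continuous map from $[0,1]$ with its usual topology. $\pi_0^{\mathrm{ps}}X$: set of path components with the final pseudotopology w.r.t. the projection. For epitopological $X$, $\pi_0^{\mathrm{epi}}X$: set of path components with the smallest epitopological structure making the projection continuous. *)

From Stdlib Require Import Reals Lra.
Open Scope R_scope.

Definition setsys (T : Type) := (T -> Prop) -> Prop.

Definition is_filter {T : Type} (F : setsys T) : Prop :=
  F (fun _ => True) /\
  (forall A B : T -> Prop, F A -> (forall x, A x -> B x) -> F B) /\
  (forall A B : T -> Prop, F A -> F B -> F (fun x => A x /\ B x)) /\
  ~ F (fun _ => False).

Definition is_ultrafilter {T : Type} (U : setsys T) : Prop :=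
  is_filter U /\ forall A : T -> Prop, U A \/ U (fun x => ~ A x).

Definition principal {T : Type} (x : T) : setsys T := fun A => A x.

Definition push {A B : Type} (f : A -> B) (F : setsys A) : setsys B :=
  fun S => F (fun a => S (f a)).

Definition filprod {A B : Type} (F : setsys A) (G : setsys B) : setsys (A * B) :=
  fun S => exists (P : A -> Prop) (Q : B -> Prop),
    F P /\ G Q /\ forall a b, P a -> Q b -> S (a, b).

(** * Pseudotopological structures
    A convergence relation; only its values on ultrafilters matter. *)
Definition conv_rel (T : Type) := setsys T -> T -> Prop.

Definition has_principal {T : Type} (c : conv_rel T) : Prop :=
  forall x : T, c (principal x) x.

Record pstop := PStop {
  pcar :> Type;
  pconv : conv_rel pcar;
  pconv_principal : has_principal pconv }.

Definition filconv {T : Type} (c : conv_rel T) (F : setsys T) (x : T) : Prop :=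
  forall U, is_ultrafilter U -> (forall S, F S -> U S) -> c U x.

Definition continuous {A B : Type} (ca : conv_rel A) (cb : conv_rel B)
    (f : A -> B) : Prop :=
  forall (U : setsys A) (x : A), is_ultrafilter U -> ca U x -> cb (push f U) (f x).

Definition prod_conv {A B : Type} (ca : conv_rel A) (cb : conv_rel B)
    : conv_rel (A * B) :=
  fun U p => ca (push fst U) (fst p) /\ cb (push snd U) (snd p).

Record topspace := TopSpace {
  tcar :> Type;
  topen : (tcar -> Prop) -> Prop;
  topen_full : topen (fun _ => True);
  topen_inter : forall A B, topen A -> topen B -> topen (fun x => A x /\ B x);
  topen_union : forall (I : Type) (A : I -> tcar -> Prop),
      (forall i, topen (A i)) -> topen (fun x => exists i, A i x) }.

Definition top_conv (Y : topspace) : conv_rel Y :=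
  fun U x => forall O, topen Y O -> O x -> U O.

Definition fspace {X Y : Type} (cx : conv_rel X) (cy : conv_rel Y) : Type :=
  { g : X -> Y | continuous cx cy g }.

Definition fev {X Y : Type} {cx : conv_rel X} {cy : conv_rel Y}
    (p : fspace cx cy * X) : Y := proj1_sig (fst p) (snd p).

(** a filter F converges to f iff for all filters G -> x,
    ev_*(F x G) -> f(x); we use it for ultrafilters F. *)
Definition fspace_conv {X Y : Type} (cx : conv_rel X) (cy : conv_rel Y)
    : conv_rel (fspace cx cy) :=
  fun F f => forall (G : setsys X) (x : X), is_filter G -> filconv cx G x ->
    filconv cy (push (@fev X Y cx cy) (filprod F G)) (proj1_sig f x).

(** * Epitopological structures: initial w.r.t. a family of maps
      X -> Z_j^{Y_j}, Y_j, Z_j topological *)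
Definition is_epi {T : Type} (c : conv_rel T) : Prop :=
  exists (J : Type) (Y Z : J -> topspace)
         (f : forall j : J, T -> fspace (top_conv (Y j)) (top_conv (Z j))),
    forall (U : setsys T) (x : T), is_ultrafilter U ->
      (c U x <-> forall j : J,
         fspace_conv (top_conv (Y j)) (top_conv (Z j)) (push (f j) U) (f j x)).

Definition I01 : Type := { t : R | 0 <= t <= 1 }.

Definition I01_conv : conv_rel I01 :=
  fun U t => forall eps : R, 0 < eps ->
    U (fun s : I01 => Rabs (proj1_sig s - proj1_sig t) < eps).

Lemma I01_0_prf : 0 <= 0 <= 1. Proof. lra. Qed.
Lemma I01_1_prf : 0 <= 1 <= 1. Proof. lra. Qed.
Definition I01_0 : I01 := exist _ 0 I01_0_prf.
Definition I01_1 : I01 := exist _ 1 I01_1_prf.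

Definition path_between (X : pstop) (x y : X) : Prop :=
  exists g : I01 -> X, continuous I01_conv (pconv X) g /\
    g I01_0 = x /\ g I01_1 = y.

Definition pi0 (X : pstop) : Type :=
  { C : X -> Prop | exists x : X, C = path_between X x }.

Definition pcls (X : pstop) (x : X) : pi0 X :=
  exist _ (path_between X x) (ex_intro _ x eq_refl).

(** pi_0^ps X: final pseudotopology w.r.t. the projection *)
Definition pi0ps_conv (X : pstop) : conv_rel (pi0 X) :=
  fun U z => (forall S, U S <-> principal z S) \/
    exists (V : setsys X) (x : X), is_ultrafilter V /\ pconv X V x /\
      z = pcls X x /\ (forall S, U S <-> push (pcls X) V S).

(** pi_0^epi X: smallest epitopological structure (i.e. with fewest
    convergent pairs) on pi0 X making the projection continuous;
    it is the intersection of all such structures. *)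
Definition pi0epi_conv (X : pstop) : conv_rel (pi0 X) :=
  fun U z => forall c : conv_rel (pi0 X),
    has_principal c -> is_epi c -> continuous (pconv X) c (pcls X) -> c U z.

(* For pi0^ps, an ultrafilter converging in pi0^ps X * pi0^ps X lifts, together with
   both marginals, to an ultrafilter on X * X converging to a pair of points, and m
   pushes it to a lift of its image under mu.

   In the epitopological case, convergence in a function space Z^Y with Y, Z
   topological is continuous convergence, i.e. joint continuity of evaluation, and
   it suffices to move one variable at a time from lifted ultrafilters to arbitrary
   pi0^epi-convergent ones.  To do so for a fixed ultrafilter Va -> a0 in the other
   variable, topologize A * S by letting the neighbourhoods of a0 be the Va-sets
   containing it and isolating the other points of A; currying along these
   topologies gives an epitopological structure on pi0 X for which the projection
   is continuous, so by minimality it is coarser than pi0^epi. *)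

From Stdlib Require Import Reals Lra Classical ProofIrrelevance
  FunctionalExtensionality PropExtensionality ClassicalEpsilon.
From mathcomp Require filter.
Set Bullet Behavior "Strict Subproofs".
Open Scope R_scope.

Lemma setsys_ext {T : Type} (F G : setsys T) : (forall S, F S <-> G S) -> F = G.
Proof.
intros h; apply functional_extensionality; intros S.
apply propositional_extensionality, h.
Qed.

Section Filters.
Context {T : Type}.
Implicit Types (F G U : setsys T) (A B : T -> Prop).

Lemma filterT F : is_filter F -> F (fun _ => True).
Proof. intros [h _]; exact h. Qed.

Lemma filterS F A B : is_filter F -> (forall x, A x -> B x) -> F A -> F B.
Proof. intros [_ [h _]] hAB hA; exact (h A B hA hAB). Qed.

Lemma filterI F A B : is_filter F -> F A -> F B -> F (fun x => A x /\ B x).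
Proof. intros [_ [_ [h _]]]; exact (h A B). Qed.

Lemma filter_ex F A : is_filter F -> F A -> exists x, A x.
Proof.
intros hF hA; apply NNPP; intros hn.
apply (proj2 (proj2 (proj2 hF))), (filterS F A); auto.
intros x hx; apply hn; exists x; exact hx.
Qed.

Lemma ultrafilter_filter U : is_ultrafilter U -> is_filter U.
Proof. intros [h _]; exact h. Qed.

Lemma ultrafilter_const U (P : Prop) : is_ultrafilter U -> U (fun _ => P) <-> P.
Proof.
intros hU; split.
- intros h; destruct (filter_ex U _ (ultrafilter_filter U hU) h) as [_ hP]; exact hP.
- intros hP; apply (filterS U (fun _ => True) (fun _ => P)); auto.
  + apply ultrafilter_filter, hU.
  + apply filterT, ultrafilter_filter, hU.
Qed.

Lemma principal_ultrafilter (x : T) : is_ultrafilter (principal x).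
Proof.
split; [split; [|split; [|split]]|]; unfold principal; auto.
intros A; apply classic.
Qed.

Lemma ultrafilter_lemma F : is_filter F ->
  exists U, is_ultrafilter U /\ forall S, F S -> U S.
Proof.
intros [hT [hS [hI h0]]].
assert (hF : filter.ProperFilter F).
{ constructor; [exact h0|].
  constructor; [exact hT | exact hI | intros A B hAB hA; exact (hS A B hA hAB)]. }
destruct (filter.ultraFilterLemma hF) as [U [hU hFU]].
exists U; split; [|exact hFU].
pose proof hU as [[hU0 [hUT hUI hUS]] _].
split; [split; [exact hUT|split; [|split; [exact hUI | exact hU0]]]|].
- intros A B hA hAB; exact (hUS A B hAB hA).
- intros A; exact (filter.in_ultra_setVsetC A hU).
Qed.

Lemma filter_by_ultrafilters F B : is_filter F ->
  (forall U, is_ultrafilter U -> (forall S, F S -> U S) -> U B) -> F B.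
Proof.
intros hF hU; apply NNPP; intros hnB.
set (G := fun Q : T -> Prop => exists A, F A /\ forall x, A x -> ~ B x -> Q x).
assert (hG : is_filter G).
{ split; [|split; [|split]].
  - exists (fun _ => True); split; [apply filterT, hF | auto].
  - intros P Q [A [hA hAP]] hPQ; exists A; split; auto.
  - intros P Q [A [hA hAP]] [A' [hA' hA'Q]].
    exists (fun x => A x /\ A' x); split; [apply filterI; auto|].
    intros x [] hx; split; auto.
  - intros [A [hA hA0]]; apply hnB, (filterS F A); auto.
    intros x hx; apply NNPP; exact (hA0 x hx). }
destruct (ultrafilter_lemma G hG) as [U [hUu hGU]].
pose proof (ultrafilter_filter U hUu) as hUf.
assert (hUB : U B) by (apply hU; auto; intros S hS; apply hGU; exists S; split; auto).
assert (hUnB : U (fun x => ~ B x))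
  by (apply hGU; exists (fun _ => True); split; [apply filterT, hF | auto]).
destruct (filter_ex U _ hUf (filterI U _ _ hUf hUB hUnB)) as [x [h1 h2]].
contradiction.
Qed.

Lemma ultrafilter_sub_eq U G : is_ultrafilter U -> is_filter G ->
  (forall S, U S -> G S) -> G = U.
Proof.
intros hU hG hUG; apply setsys_ext; intros S; split; [|auto].
intros hS; destruct (proj2 hU S) as [h|h]; [exact h|].
destruct (filter_ex G _ hG (filterI G _ _ hG hS (hUG _ h))) as [x [h1 h2]].
contradiction.
Qed.

End Filters.

Lemma push_filter {A B : Type} (f : A -> B) (U : setsys A) :
  is_filter U -> is_filter (push f U).
Proof.
intros hU; unfold push; split; [|split; [|split]].
- apply filterT, hU.
- intros P Q hP hPQ; apply (filterS U _ _ hU (fun x => hPQ (f x)) hP).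
- intros P Q; apply filterI, hU.
- apply (proj2 (proj2 (proj2 hU))).
Qed.

Lemma push_ultrafilter {A B : Type} (f : A -> B) (U : setsys A) :
  is_ultrafilter U -> is_ultrafilter (push f U).
Proof.
intros hU; split; [apply push_filter, ultrafilter_filter, hU|].
intros P; apply (proj2 hU (fun a => P (f a))).
Qed.

Lemma push_eq_on {A B : Type} (f g : A -> B) (U : setsys A) (P : A -> Prop) :
  is_filter U -> U P -> (forall x, P x -> f x = g x) -> push f U = push g U.
Proof.
intros hU hP e; apply setsys_ext; intros S; unfold push.
split; intros hS; eapply (filterS U _ _ hU); try exact (filterI U _ _ hU hP hS);
  intros x [hx h]; [rewrite <- e | rewrite e]; auto.
Qed.

Lemma filprod_filter {A B : Type} (F : setsys A) (G : setsys B) :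
  is_filter F -> is_filter G -> is_filter (filprod F G).
Proof.
intros hF hG; unfold filprod; split; [|split; [|split]].
- exists (fun _ => True), (fun _ => True).
  split; [apply filterT, hF | split; [apply filterT, hG | auto]].
- intros P Q [P1 [Q1 [h1 [h2 h]]]] hPQ; exists P1, Q1; split; auto.
- intros P Q [P1 [Q1 [h1 [h2 h]]]] [P2 [Q2 [k1 [k2 k]]]].
  exists (fun a => P1 a /\ P2 a), (fun b => Q1 b /\ Q2 b).
  split; [apply filterI; auto | split; [apply filterI; auto|]].
  intros a b [] []; split; auto.
- intros [P [Q [hP [hQ h]]]].
  destruct (filter_ex F P hF hP) as [a ha], (filter_ex G Q hG hQ) as [b hb].
  exact (h a b ha hb).
Qed.

Lemma filprod_mono {A B : Type} (F F' : setsys A) (G G' : setsys B) P :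
  (forall S, F S -> F' S) -> (forall S, G S -> G' S) ->
  filprod F G P -> filprod F' G' P.
Proof.
intros hF hG [P1 [Q1 [h1 [h2 h]]]]; exists P1, Q1; auto.
Qed.

Lemma filprod_pushE {A B C : Type} (h : A -> C) (U : setsys A) (G : setsys B) P :
  is_filter U ->
  filprod (push h U) G P <-> filprod U G (fun p => P (h (fst p), snd p)).
Proof.
intros hU; split.
- intros [P1 [Q1 [h1 [h2 hP]]]].
  exists (fun a => P1 (h a)), Q1; split; [exact h1 | split; [exact h2|]].
  intros a b ha hb; exact (hP _ b ha hb).
- intros [P1 [Q1 [h1 [h2 hP]]]].
  exists (fun c => exists a, P1 a /\ c = h a), Q1; split; [|split; [exact h2|]].
  + apply (filterS U P1); auto; intros a ha; exists a; auto.
  + intros c b [a [ha ->]] hb; exact (hP a b ha hb).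
Qed.

Lemma filprod_push_proj {A B : Type} (U : setsys (A * B)) S :
  is_filter U -> filprod (push fst U) (push snd U) S -> U S.
Proof.
intros hU [P [Q [hP [hQ h]]]].
eapply (filterS U _ _ hU); [|exact (filterI U _ _ hU hP hQ)].
intros [a b] [ha hb]; exact (h a b ha hb).
Qed.

Lemma ultrafilter_filprod_proj {A B : Type} (V1 : setsys A) (V2 : setsys B) U :
  is_ultrafilter V1 -> is_ultrafilter V2 -> is_ultrafilter U ->
  (forall S, filprod V1 V2 S -> U S) -> push fst U = V1 /\ push snd U = V2.
Proof.
intros hV1 hV2 hU hsub.
split; apply ultrafilter_sub_eq; auto; try (apply push_filter, ultrafilter_filter, hU);
  intros S hS; apply hsub.
- exists S, (fun _ => True).
  split; [exact hS | split; [apply filterT, ultrafilter_filter, hV2 | auto]].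
- exists (fun _ => True), S.
  split; [apply filterT, ultrafilter_filter, hV1 | split; [exact hS | auto]].
Qed.

Definition nbhs (Y : topspace) (y : Y) : setsys Y :=
  fun Q => exists R, topen Y R /\ R y /\ forall y', R y' -> Q y'.

Lemma open_nbhs (Y : topspace) (y : Y) (O : Y -> Prop) :
  topen Y O -> O y -> nbhs Y y O.
Proof. intros hO hy; exists O; auto. Qed.

Lemma nbhs_filter (Y : topspace) (y : Y) : is_filter (nbhs Y y).
Proof.
split; [|split; [|split]].
- apply open_nbhs; [apply topen_full | exact I].
- intros P Q [R [hR [hy h]]] hPQ; exists R; auto.
- intros P Q [R [hR [hy h]]] [R' [hR' [hy' h']]].
  exists (fun x => R x /\ R' x); split; [apply topen_inter; auto|].
  split; [auto|]; intros x []; split; auto.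
- intros [R [_ [hy h]]]; exact (h y hy).
Qed.

Lemma nbhs_filconv (Y : topspace) (y : Y) : filconv (top_conv Y) (nbhs Y y) y.
Proof. intros U _ hsub O hO hy; apply hsub, open_nbhs; auto. Qed.

Lemma nbhs_sub_filconv (Y : topspace) (F : setsys Y) (y : Y) :
  is_filter F -> filconv (top_conv Y) F y -> forall S, nbhs Y y S -> F S.
Proof.
intros hF hc S [R [hR [hy hRS]]]; apply (filterS F R); auto.
apply filter_by_ultrafilters; auto.
intros U hU hFU; exact (hc U hU hFU R hR hy).
Qed.

Lemma continuous_nbhs (Y Z : topspace) (h : Y -> Z) (y : Y) (O : Z -> Prop) :
  continuous (top_conv Y) (top_conv Z) h -> topen Z O -> O (h y) ->
  nbhs Y y (fun y' => O (h y')).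
Proof.
intros hc hO hy; apply filter_by_ultrafilters; [apply nbhs_filter|].
intros U hU hsub; apply (hc U y hU); auto.
intros R hR hRy; apply hsub, open_nbhs; auto.
Qed.

Lemma continuous_of_open (Y Z : topspace) (h : Y -> Z) :
  (forall O, topen Z O -> topen Y (fun y => O (h y))) ->
  continuous (top_conv Y) (top_conv Z) h.
Proof. intros ho U y _ hc O hO hy; apply hc; auto. Qed.

Definition open_of_nbhs {T : Type} (N : T -> setsys T) (O : T -> Prop) : Prop :=
  forall x, O x -> N x O.

Section TopOfNbhs.
Context {T : Type} (N : T -> setsys T) (hN : forall x, is_filter (N x)).

Lemma open_of_nbhs_full : open_of_nbhs N (fun _ => True).
Proof. intros x _; apply filterT, hN. Qed.

Lemma open_of_nbhs_inter A B : open_of_nbhs N A -> open_of_nbhs N B ->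
  open_of_nbhs N (fun x => A x /\ B x).
Proof. intros hA hB x [hx hx']; apply filterI; auto. Qed.

Lemma open_of_nbhs_union (I : Type) (A : I -> T -> Prop) :
  (forall i, open_of_nbhs N (A i)) -> open_of_nbhs N (fun x => exists i, A i x).
Proof.
intros hA x [i hx]; apply (filterS (N x) (A i)); [apply hN | | exact (hA i x hx)].
intros y hy; exists i; exact hy.
Qed.

Definition top_of_nbhs : topspace :=
  TopSpace T (open_of_nbhs N) open_of_nbhs_full open_of_nbhs_inter open_of_nbhs_union.

End TopOfNbhs.

Definition pointed_nbhs {A : Type} (a0 : A) (V : setsys A) (a : A) : setsys A :=
  fun P => P a /\ (a = a0 -> V P).

Lemma pointed_nbhs_filter {A : Type} (a0 : A) (V : setsys A) (a : A) :
  is_filter V -> is_filter (pointed_nbhs a0 V a).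
Proof.
intros hV; unfold pointed_nbhs; split; [|split; [|split]].
- split; [exact I | intros _; apply filterT, hV].
- intros P Q [hP hVP] hPQ; split; auto; intros e; apply (filterS V P); auto.
- intros P Q [hP hVP] [hQ hVQ]; split; [auto | intros e; apply filterI; auto].
- intros [[] _].
Qed.

Definition pointed_prod_top {A : Type} (a0 : A) (V : setsys A) (hV : is_filter V)
    (S : topspace) : topspace :=
  top_of_nbhs (fun p : A * S => filprod (pointed_nbhs a0 V (fst p)) (nbhs S (snd p)))
    (fun p => filprod_filter _ _ (pointed_nbhs_filter a0 V (fst p) hV)
                (nbhs_filter S (snd p))).

Lemma pointed_rect_open {A : Type} (a0 : A) (V : setsys A) (hV : is_filter V)
    (S : topspace) (P : A -> Prop) (R : S -> Prop) :
  (P a0 -> V P) -> topen S R ->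
  topen (pointed_prod_top a0 V hV S) (fun p => P (fst p) /\ R (snd p)).
Proof.
intros hP hR [a s] [ha hs]; simpl in *; exists P, R.
split; [split; [exact ha | intros ->; exact (hP ha)]|].
split; [apply open_nbhs; auto | intros a' s' h1 h2; split; auto].
Qed.

Definition jointly_continuous_at {A : Type} {S T : topspace} (U : setsys A) (a : A)
    (F : A -> S -> T) : Prop :=
  forall s O, topen T O -> O (F a s) ->
    filprod U (nbhs S s) (fun p => O (F (fst p) (snd p))).

Section JointContinuity.
Context {S T : topspace}.

Lemma jointly_continuous_at_ext {A : Type} (U : setsys A) a (F G : A -> S -> T) :
  (forall a' s, F a' s = G a' s) ->
  jointly_continuous_at U a F -> jointly_continuous_at U a G.
Proof.
intros e; replace G with F; [auto|].
apply functional_extensionality; intros a'; apply functional_extensionality; auto.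
Qed.

Lemma jointly_continuous_at_sub {A : Type} (U U' : setsys A) a (F : A -> S -> T) :
  (forall P, U P -> U' P) ->
  jointly_continuous_at U a F -> jointly_continuous_at U' a F.
Proof. intros hUU' hF s O hO hOs; apply (filprod_mono U U' (nbhs S s) (nbhs S s)); auto.
Qed.

Lemma jointly_continuous_at_pushE {A C : Type} (h : C -> A) (U : setsys C) c
    (F : A -> S -> T) :
  is_filter U ->
  jointly_continuous_at (push h U) (h c) F <->
  jointly_continuous_at U c (fun c' => F (h c')).
Proof.
intros hU; split; intros hF s O hO hOs.
- exact (proj1 (filprod_pushE h U _ _ hU) (hF s O hO hOs)).
- exact (proj2 (filprod_pushE h U _ _ hU) (hF s O hO hOs)).
Qed.

Lemma jointly_continuous_at_principal {A : Type} (a : A) (F : A -> S -> T) :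
  continuous (top_conv S) (top_conv T) (F a) ->
  jointly_continuous_at (principal a) a F.
Proof.
intros hc s O hO hOs; exists (fun a' => a' = a), (fun s' => O (F a s')).
split; [reflexivity | split; [apply continuous_nbhs; auto|]].
intros a' s' -> h; exact h.
Qed.

Lemma jointly_continuous_at_swap {A B : Type} (U : setsys A) (V : setsys B) a b
    (F : A * B -> S -> T) :
  jointly_continuous_at (filprod U V) (a, b) F ->
  jointly_continuous_at (filprod V U) (b, a) (fun p => F (snd p, fst p)).
Proof.
intros hF s O hO hOs.
destruct (hF s O hO hOs) as [P [N [[P1 [P2 [h1 [h2 hP]]]] [hN h]]]].
exists (fun p => P (snd p, fst p)), N; split; [|split; [exact hN|]].
- exists P2, P1; split; [exact h2 | split; [exact h1|]].
  intros b' a' hb ha; exact (hP a' b' ha hb).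
- intros p s' hp hs'; exact (h _ s' hp hs').
Qed.

Lemma jointly_continuous_at_rect {A B : Type} (U : setsys A) (V : setsys B) a b
    (F : A * B -> S -> T) s O :
  jointly_continuous_at (filprod U V) (a, b) F -> topen T O -> O (F (a, b) s) ->
  exists P Q R, U P /\ V Q /\ topen S R /\ R s /\
    forall a' b' s', P a' -> Q b' -> R s' -> O (F (a', b') s').
Proof.
intros hF hO hOs.
destruct (hF s O hO hOs) as [PQ [N [[P [Q [hP [hQ hPQ]]]] [[R [hR [hs hRN]]] h]]]].
exists P, Q, R; repeat split; auto.
intros a' b' s' h1 h2 h3; exact (h (a', b') s' (hPQ a' b' h1 h2) (hRN s' h3)).
Qed.

Lemma jointly_continuous_at_ultra {A : Type} (G : setsys A) a (F : A -> S -> T) :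
  is_filter G ->
  (forall U, is_ultrafilter U -> (forall P, G P -> U P) -> jointly_continuous_at U a F) ->
  jointly_continuous_at G a F.
Proof.
intros hG hU s O hO hOs.
apply filter_by_ultrafilters; [apply filprod_filter; auto; apply nbhs_filter|].
intros U hUu hsub; apply filprod_push_proj; [apply ultrafilter_filter, hUu|].
apply (filprod_mono (push fst U) _ (nbhs S s)); auto.
- intros P hP; apply hsub; exists (fun _ => True), P.
  split; [apply filterT, hG | split; auto].
- apply (hU (push fst U)); auto; [apply push_ultrafilter, hUu|].
  intros P hP; apply hsub; exists P, (fun _ => True).
  split; [exact hP | split; [apply filterT, nbhs_filter | auto]].
Qed.

Lemma fspace_convE {A : Type} (g : A -> fspace (top_conv S) (top_conv T)) (U : setsys A) a :
  is_filter U ->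
  fspace_conv (top_conv S) (top_conv T) (push g U) (g a) <->
  jointly_continuous_at U a (fun a' s => proj1_sig (g a') s).
Proof.
intros hU; split.
- intros hc s O hO hOs.
  assert (hE : is_filter (push fev (filprod (push g U) (nbhs S s)))).
  { apply push_filter, filprod_filter; [apply push_filter, hU | apply nbhs_filter]. }
  pose proof (hc (nbhs S s) s (nbhs_filter S s) (nbhs_filconv S s)) as hev.
  exact (proj1 (filprod_pushE g U _ _ hU)
    (nbhs_sub_filconv T _ _ hE hev O (open_nbhs T _ O hO hOs))).
- intros hF G s hG hGs V hV hsub O hO hOs; apply hsub.
  apply (filprod_mono (push g U) _ (nbhs S s)); auto.
  + apply nbhs_sub_filconv; auto.
  + exact (proj2 (filprod_pushE g U _ _ hU) (hF s O hO hOs)).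
Qed.

Lemma fspace_conv_principal {A : Type} (g : A -> fspace (top_conv S) (top_conv T)) a :
  fspace_conv (top_conv S) (top_conv T) (push g (principal a)) (g a).
Proof.
apply fspace_convE; [apply ultrafilter_filter, principal_ultrafilter|].
apply jointly_continuous_at_principal, (proj2_sig (g a)).
Qed.

End JointContinuity.

Lemma continuous_comp {A B C : Type} (ca : conv_rel A) (cb : conv_rel B) (cc : conv_rel C)
    (f : A -> B) (g : B -> C) :
  continuous ca cb f -> continuous cb cc g -> continuous ca cc (fun a => g (f a)).
Proof.
intros hf hg U x hU hx; apply (hg (push f U)); [apply push_ultrafilter | apply hf]; auto.
Qed.

Lemma continuous_const {A B : Type} (ca : conv_rel A) (cb : conv_rel B) (y : B) :
  has_principal cb -> continuous ca cb (fun _ => y).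
Proof.
intros hp U x hU _; replace (push (fun _ => y) U) with (principal y); [apply hp|].
apply setsys_ext; intros S; symmetry; exact (ultrafilter_const U (S y) hU).
Qed.

Lemma I01_eq (s t : I01) : proj1_sig s = proj1_sig t -> s = t.
Proof.
destruct s as [s hs], t as [t ht]; simpl; intros ->.
f_equal; apply proof_irrelevance.
Qed.

Definition clampR (t : R) : R := Rmax 0 (Rmin 1 t).

Lemma clampR_I01 (t : R) : 0 <= clampR t <= 1.
Proof. unfold clampR, Rmax, Rmin; repeat destruct Rle_dec; lra. Qed.

Lemma clampR_lipschitz (t u : R) : Rabs (clampR t - clampR u) <= Rabs (t - u).
Proof.
unfold clampR, Rmax, Rmin; repeat destruct Rle_dec;
  unfold Rabs; repeat destruct Rcase_abs; lra.
Qed.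

Definition clamp (t : R) : I01 := exist _ (clampR t) (clampR_I01 t).

Lemma clamp_eq (t : R) (s : I01) : t = proj1_sig s -> clamp t = s.
Proof.
intros ->; apply I01_eq; simpl; destruct s as [s hs]; simpl.
unfold clampR, Rmax, Rmin; repeat destruct Rle_dec; lra.
Qed.

Lemma continuous_clamp_lipschitz (f : R -> R) (K : R) :
  0 < K -> (forall t u, Rabs (f t - f u) <= K * Rabs (t - u)) ->
  continuous I01_conv I01_conv (fun s => clamp (f (proj1_sig s))).
Proof.
intros hK hf U t hU ht eps heps; unfold push.
assert (heps' : 0 < eps / K) by (apply Rdiv_lt_0_compat; lra).
apply (filterS U _ _ (ultrafilter_filter U hU)) with (2 := ht (eps / K) heps').
intros s hs; simpl.
apply (Rle_lt_trans _ _ _ (clampR_lipschitz _ _)), (Rle_lt_trans _ _ _ (hf _ _)).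
apply (Rmult_lt_compat_l K) in hs; [|exact hK].
replace (K * (eps / K)) with eps in hs by (field; lra); exact hs.
Qed.

Lemma I01_conv_adherent (U : setsys I01) (t : I01) (A : I01 -> Prop) (eps : R) :
  is_ultrafilter U -> I01_conv U t -> U A -> 0 < eps ->
  exists s, A s /\ Rabs (proj1_sig s - proj1_sig t) < eps.
Proof.
intros hU ht hA heps; apply (filter_ex U); [apply ultrafilter_filter, hU|].
apply filterI; auto; apply ultrafilter_filter, hU.
Qed.

Lemma continuous_I01_paste {Y : Type} (cY : conv_rel Y) (k g h : I01 -> Y) (t0 : R) :
  continuous I01_conv cY g -> continuous I01_conv cY h ->
  (forall s, proj1_sig s <= t0 -> k s = g s) ->
  (forall s, t0 <= proj1_sig s -> k s = h s) ->
  continuous I01_conv cY k.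
Proof.
intros hg hh hkg hkh U t hU ht; pose proof (ultrafilter_filter U hU) as hUf.
destruct (proj2 hU (fun s : I01 => proj1_sig s <= t0)) as [hle|hgt].
- assert (t_le : proj1_sig t <= t0).
  { apply Rnot_lt_le; intros hlt.
    destruct (I01_conv_adherent U t _ (proj1_sig t - t0) hU ht hle) as [s [hs hst]];
      [lra|].
    unfold Rabs in hst; destruct Rcase_abs in hst; lra. }
  rewrite (push_eq_on k g U _ hUf hle hkg), hkg by exact t_le; apply hg; auto.
- assert (t_ge : t0 <= proj1_sig t).
  { apply Rnot_lt_le; intros hlt.
    destruct (I01_conv_adherent U t _ (t0 - proj1_sig t) hU ht hgt) as [s [hs hst]];
      [lra|].
    unfold Rabs in hst; destruct Rcase_abs in hst; lra. }
  rewrite (push_eq_on k h U _ hUf hgt); [|intros s hs; apply hkh; lra].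
  rewrite hkh by exact t_ge; apply hh; auto.
Qed.

Section Paths.
Variable X : pstop.

Lemma path_refl (x : X) : path_between X x x.
Proof.
exists (fun _ => x); split; [|split; reflexivity].
apply continuous_const, pconv_principal.
Qed.

Lemma path_sym (x y : X) : path_between X x y -> path_between X y x.
Proof.
intros [g [hg [g0 g1]]]; exists (fun s => g (clamp (1 - proj1_sig s))).
split; [|split].
- apply (continuous_comp _ I01_conv); [|exact hg].
  apply (continuous_clamp_lipschitz _ 1); [lra|].
  intros t u; unfold Rabs; repeat destruct Rcase_abs; lra.
- rewrite (clamp_eq _ I01_1); [exact g1 | simpl; lra].
- rewrite (clamp_eq _ I01_0); [exact g0 | simpl; lra].
Qed.

Lemma path_concat (x y z : X) :
  path_between X x y -> path_between X y z -> path_between X x z.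
Proof.
intros [g [hg [g0 g1]]] [h [hh [h0 h1]]].
set (g' := fun s : I01 => g (clamp (2 * proj1_sig s))).
set (h' := fun s : I01 => h (clamp (2 * proj1_sig s - 1))).
exists (fun s => if Rle_dec (proj1_sig s) (1 / 2) then g' s else h' s).
split; [|split].
- apply (continuous_I01_paste _ _ g' h' (1 / 2)).
  + apply (continuous_comp _ I01_conv _ (fun s => clamp (2 * proj1_sig s)) g);
      [|exact hg].
    apply (continuous_clamp_lipschitz (fun t => 2 * t) 2); [lra|].
    intros t u; unfold Rabs; repeat destruct Rcase_abs; lra.
  + apply (continuous_comp _ I01_conv _ (fun s => clamp (2 * proj1_sig s - 1)) h);
      [|exact hh].
    apply (continuous_clamp_lipschitz (fun t => 2 * t - 1) 2); [lra|].
    intros t u; unfold Rabs; repeat destruct Rcase_abs; lra.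
  + intros s hs; destruct Rle_dec; [reflexivity | contradiction].
  + intros s hs; destruct Rle_dec as [hle|]; [|reflexivity].
    unfold g', h'.
    rewrite (clamp_eq _ I01_1), (clamp_eq _ I01_0) by (simpl; lra).
    congruence.
- destruct Rle_dec as [_|hn]; [|simpl in hn; lra].
  unfold g'; rewrite (clamp_eq _ I01_0); [exact g0 | simpl; lra].
- destruct Rle_dec as [hn|_]; [simpl in hn; lra|].
  unfold h'; rewrite (clamp_eq _ I01_1); [exact h1 | simpl; lra].
Qed.

Variable m : X * X -> X.
Hypothesis m_cont : continuous (prod_conv (pconv X) (pconv X)) (pconv X) m.

Lemma path_map2 (x x' y y' : X) :
  path_between X x x' -> path_between X y y' ->
  path_between X (m (x, y)) (m (x', y')).
Proof.
intros [g [hg [g0 g1]]] [h [hh [h0 h1]]].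
exists (fun t => m (g t, h t)); split; [|split; congruence].
apply (continuous_comp _ (prod_conv (pconv X) (pconv X)) _ (fun t => (g t, h t)) m);
  [|exact m_cont].
intros U t hU ht; split; [apply hg | apply hh]; auto.
Qed.

End Paths.

Section Pi0.
Variable X : pstop.

Lemma pi0_eq (C D : pi0 X) : proj1_sig C = proj1_sig D -> C = D.
Proof.
destruct C as [C hC], D as [D hD]; simpl; intros ->.
f_equal; apply proof_irrelevance.
Qed.

Lemma pcls_surj (C : pi0 X) : exists x, pcls X x = C.
Proof. destruct C as [C [x ->]]; exists x; apply pi0_eq; reflexivity. Qed.

Lemma pcls_eq (x y : X) : path_between X x y -> pcls X x = pcls X y.
Proof.
intros hxy; apply pi0_eq; simpl.
apply functional_extensionality; intros z; apply propositional_extensionality.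
split; intros hz.
- apply (path_concat X y x); [apply path_sym|]; auto.
- apply (path_concat X x y); auto.
Qed.

Lemma pcls_path (x y : X) : pcls X x = pcls X y -> path_between X x y.
Proof.
intros e; apply (f_equal (@proj1_sig _ _)) in e; simpl in e.
rewrite e; apply path_refl.
Qed.

Definition pi0_rep (C : pi0 X) : X :=
  proj1_sig (constructive_indefinite_description _ (pcls_surj C)).

Lemma pcls_rep (C : pi0 X) : pcls X (pi0_rep C) = C.
Proof. apply (proj2_sig (constructive_indefinite_description _ (pcls_surj C))). Qed.

Variable m : X * X -> X.

Definition pi0_mul (p : pi0 X * pi0 X) : pi0 X :=
  pcls X (m (pi0_rep (fst p), pi0_rep (snd p))).

Hypothesis m_cont : continuous (prod_conv (pconv X) (pconv X)) (pconv X) m.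

Lemma pi0_mul_pcls (x y : X) : pi0_mul (pcls X x, pcls X y) = pcls X (m (x, y)).
Proof.
apply pcls_eq, path_map2; [exact m_cont | |]; apply pcls_path, pcls_rep.
Qed.

End Pi0.

Lemma ultrafilter_lift_prod {X1 X2 B1 B2 : Type} (q1 : X1 -> B1) (q2 : X2 -> B2)
    (V1 : setsys X1) (V2 : setsys X2) (W : setsys (B1 * B2)) :
  is_ultrafilter V1 -> is_ultrafilter V2 -> is_ultrafilter W ->
  push q1 V1 = push fst W -> push q2 V2 = push snd W ->
  exists V, is_ultrafilter V /\ push fst V = V1 /\ push snd V = V2 /\
    push (fun p => (q1 (fst p), q2 (snd p))) V = W.
Proof.
intros hV1 hV2 hW e1 e2.
pose proof (ultrafilter_filter V1 hV1) as hV1f.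
pose proof (ultrafilter_filter V2 hV2) as hV2f.
pose proof (ultrafilter_filter W hW) as hWf.
set (F := fun S : X1 * X2 -> Prop => exists A1 A2 E, V1 A1 /\ V2 A2 /\ W E /\
  forall a1 a2, A1 a1 -> A2 a2 -> E (q1 a1, q2 a2) -> S (a1, a2)).
assert (hF : is_filter F).
{ split; [|split; [|split]].
  - exists (fun _ => True), (fun _ => True), (fun _ => True).
    repeat split; auto; apply filterT; auto.
  - intros P Q [A1 [A2 [E [h1 [h2 [hE h]]]]]] hPQ.
    exists A1, A2, E; repeat split; auto.
  - intros P Q [A1 [A2 [E [h1 [h2 [hE h]]]]]] [A1' [A2' [E' [h1' [h2' [hE' h']]]]]].
    exists (fun a => A1 a /\ A1' a), (fun a => A2 a /\ A2' a), (fun b => E b /\ E' b).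
    repeat split; try apply filterI; auto.
    + apply h; tauto.
    + apply h'; tauto.
  - intros [A1 [A2 [E [h1 [h2 [hE h]]]]]].
    assert (w1 : W (fun b => exists a1, A1 a1 /\ fst b = q1 a1)).
    { change (push fst W (fun b => exists a1, A1 a1 /\ b = q1 a1)); rewrite <- e1.
      apply (filterS V1 A1); auto; intros a ha; exists a; auto. }
    assert (w2 : W (fun b => exists a2, A2 a2 /\ snd b = q2 a2)).
    { change (push snd W (fun b => exists a2, A2 a2 /\ b = q2 a2)); rewrite <- e2.
      apply (filterS V2 A2); auto; intros a ha; exists a; auto. }
    destruct (filter_ex W _ hWf (filterI W _ _ hWf hE (filterI W _ _ hWf w1 w2)))
      as [[b1 b2] [hb [[a1 [ha1 e1']] [a2 [ha2 e2']]]]].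
    simpl in e1', e2'; subst b1 b2; exact (h a1 a2 ha1 ha2 hb). }
destruct (ultrafilter_lemma F hF) as [V [hV hFV]].
destruct (ultrafilter_filprod_proj V1 V2 V hV1 hV2 hV) as [p1 p2].
{ intros S [A1 [A2 [h1 [h2 h]]]]; apply hFV; exists A1, A2, (fun _ => True).
  repeat split; auto; apply filterT; auto. }
exists V; split; [exact hV | split; [exact p1 | split; [exact p2|]]].
apply ultrafilter_sub_eq; [exact hW | apply push_filter, ultrafilter_filter, hV|].
intros E hE; apply hFV; exists (fun _ => True), (fun _ => True), E.
repeat split; auto; apply filterT; auto.
Qed.

Lemma pi0ps_conv_lift (X : pstop) (U : setsys (pi0 X)) (C : pi0 X) :
  pi0ps_conv X U C -> exists V x, is_ultrafilter V /\ pconv X V x /\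
    C = pcls X x /\ U = push (pcls X) V.
Proof.
intros [h | [V [x [hV [hx [hC hU]]]]]].
- destruct (pcls_surj X C) as [x <-]; exists (principal x), x.
  split; [apply principal_ultrafilter | split; [apply pconv_principal | split]].
  + reflexivity.
  + apply setsys_ext, h.
- exists V, x; split; [exact hV | split; [exact hx | split; [exact hC|]]].
  apply setsys_ext, hU.
Qed.

Lemma pi0_mul_continuous_ps (X : pstop) (m : X * X -> X) :
  continuous (prod_conv (pconv X) (pconv X)) (pconv X) m ->
  continuous (prod_conv (pi0ps_conv X) (pi0ps_conv X)) (pi0ps_conv X) (pi0_mul X m).
Proof.
intros hm W [C D] hW [hC hD]; simpl in hC, hD.
destruct (pi0ps_conv_lift X _ _ hC) as [V1 [x1 [hV1 [hx1 [-> e1]]]]].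
destruct (pi0ps_conv_lift X _ _ hD) as [V2 [x2 [hV2 [hx2 [-> e2]]]]].
destruct (ultrafilter_lift_prod (pcls X) (pcls X) V1 V2 W hV1 hV2 hW
  (eq_sym e1) (eq_sym e2))
  as [V [hV [h1 [h2 <-]]]].
right; exists (push m V), (m (x1, x2)).
split; [apply push_ultrafilter, hV|].
split; [apply hm; [exact hV | split; simpl; [rewrite h1 | rewrite h2]; assumption]|].
split; [apply pi0_mul_pcls, hm|].
intros S; unfold push; simpl.
replace (fun p => S (pi0_mul X m (pcls X (fst p), pcls X (snd p))))
  with (fun p => S (pcls X (m p))); [tauto|].
apply functional_extensionality; intros [x y]; rewrite pi0_mul_pcls; auto.
Qed.

Definition epi_final {X B : Type} (cX : conv_rel X) (q : X -> B) : conv_rel B :=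
  fun U b => forall c, has_principal c -> is_epi c -> continuous cX c q -> c U b.

Section EpiFinal.
Variables (X B : Type) (cX : conv_rel X) (q : X -> B).
Hypothesis cX_principal : has_principal cX.
Hypothesis q_surj : forall b, exists x, q x = b.
Variables (A : Type) (cA : conv_rel A) (S T : topspace) (F : A * B -> S -> T).
Hypothesis cA_principal : has_principal cA.
Hypothesis F_cont : forall Va a V x, is_ultrafilter Va -> cA Va a ->
  is_ultrafilter V -> cX V x ->
  jointly_continuous_at (filprod Va V) (a, x) (fun p => F (fst p, q (snd p))).

Lemma F_cont_pointed Va a0 V x a s O :
  is_ultrafilter Va -> cA Va a0 -> is_ultrafilter V -> cX V x ->
  topen T O -> O (F (a, q x) s) ->
  exists P Q R, P a /\ (P a0 -> Va P) /\ V Q /\ topen S R /\ R s /\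
    forall a' x' s', P a' -> Q x' -> R s' -> O (F (a', q x') s').
Proof.
intros hVa ha0 hV hx hO hOs.
destruct (jointly_continuous_at_rect _ _ a x _ s O
  (F_cont _ _ _ _ (principal_ultrafilter a) (cA_principal a) hV hx) hO hOs)
  as [P0 [Q0 [R0 [hP0 [hQ0 [hR0 [hs0 h0]]]]]]].
destruct (classic (a = a0)) as [<-|hne].
- destruct (jointly_continuous_at_rect _ _ a x _ s O (F_cont _ _ _ _ hVa ha0 hV hx) hO hOs)
    as [P1 [Q1 [R1 [hP1 [hQ1 [hR1 [hs1 h1]]]]]]].
  pose proof (ultrafilter_filter V hV) as hVf.
  exists (fun a' => a' = a \/ P1 a'), (fun x' => Q0 x' /\ Q1 x'),
    (fun s' => R0 s' /\ R1 s').
  split; [left; reflexivity|].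
  split; [intros _; apply (filterS Va P1); auto; apply ultrafilter_filter, hVa|].
  split; [apply filterI; auto|].
  split; [apply topen_inter; auto | split; [auto|]].
  intros a' x' s' [->|ha'] [] []; [apply h0 | apply h1]; auto.
- exists (fun a' => a' = a), Q0, R0.
  split; [reflexivity | split; [intros e; congruence|]].
  split; [exact hQ0 | split; [exact hR0 | split; [exact hs0|]]].
  intros a' x' s' -> hx' hs'; apply h0; auto.
Qed.

Lemma F_section_continuous (Va : setsys A) (a0 : A) (hVa : is_ultrafilter Va)
    (ha0 : cA Va a0) (b : B) :
  continuous (top_conv (pointed_prod_top a0 Va (ultrafilter_filter Va hVa) S)) (top_conv T)
    (fun p => F (fst p, b) (snd p)).
Proof.
destruct (q_surj b) as [x <-].
apply continuous_of_open; intros O hO [a s] hOs; simpl in hOs.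
destruct (F_cont_pointed Va a0 (principal x) x a s O hVa ha0 (principal_ultrafilter x)
  (cX_principal x) hO hOs) as [P [Q [R [hPa [hP [hQ [hR [hs h]]]]]]]].
exists P, R; split; [split; [exact hPa | simpl; intros ->; exact (hP hPa)]|].
split; [apply open_nbhs; auto|].
intros a' s' h1 h2; exact (h a' x s' h1 hQ h2).
Qed.

Lemma jointly_continuous_epi_final Va a U b :
  is_ultrafilter Va -> cA Va a -> is_ultrafilter U -> epi_final cX q U b ->
  jointly_continuous_at (filprod Va U) (a, b) F.
Proof.
intros hVa ha hU hb s O hO hOs.
set (J := {k : setsys A * A | is_ultrafilter (fst k) /\ cA (fst k) (snd k)}).
set (Y := fun k : J => pointed_prod_top (snd (proj1_sig k)) (fst (proj1_sig k))
  (ultrafilter_filter _ (proj1 (proj2_sig k))) S).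
set (psi := fun (k : J) (b' : B) =>
  exist (continuous (top_conv (Y k)) (top_conv T)) _
    (F_section_continuous _ _ (proj1 (proj2_sig k)) (proj2 (proj2_sig k)) b')).
assert (hc : forall k,
  fspace_conv (top_conv (Y k)) (top_conv T) (push (psi k) U) (psi k b)).
{ apply hb.
  - intros b' k; apply fspace_conv_principal.
  - exists J, Y, (fun _ => T), psi; intros; reflexivity.
  - intros V x hV hx k.
    apply fspace_convE; [apply push_filter, ultrafilter_filter, hV|].
    apply jointly_continuous_at_pushE; [apply ultrafilter_filter, hV|].
    intros [a' s'] O' hO' hO's.
    destruct k as [[Vk ak] [hVk hak]]; simpl in *.
    destruct (F_cont_pointed Vk ak V x a' s' O' hVk hak hV hx hO' hO's)
      as [P [Q [R [hPa [hP [hQ [hR [hs h]]]]]]]].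
    exists Q, (fun p => P (fst p) /\ R (snd p)).
    split; [exact hQ|]; split.
    + exists (fun p => P (fst p) /\ R (snd p)).
      split; [apply pointed_rect_open; auto | split; [split; auto | auto]].
    + intros x' [a'' s''] h1 [h2 h3]; exact (h a'' x' s'' h2 h1 h3). }
destruct (proj1 (fspace_convE (psi (exist _ (Va, a) (conj hVa ha))) U b
  (ultrafilter_filter U hU))
  (hc _) (a, s) O hO hOs) as [Q [N [hQ [[R [hR [hRas hRN]]] h]]]].
destruct (hR (a, s) hRas) as [P [C [[hPa hP] [hC hPC]]]].
exists (fun p => P (fst p) /\ Q (snd p)), C.
split; [exists P, Q; split; [exact (hP eq_refl) | split; [exact hQ | auto]]|].
split; [exact hC|].
intros [a' b'] s' [h1 h2] h3; exact (h b' (a', s') h2 (hRN _ (hPC a' s' h1 h3))).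
Qed.

End EpiFinal.

Lemma jointly_continuous_filprod {A1 A2 : Type} (c1 : conv_rel A1) (c2 : conv_rel A2)
    {S T : topspace} (g : A1 * A2 -> fspace (top_conv S) (top_conv T)) :
  continuous (prod_conv c1 c2) (fspace_conv (top_conv S) (top_conv T)) g ->
  forall V1 a1 V2 a2, is_ultrafilter V1 -> c1 V1 a1 -> is_ultrafilter V2 -> c2 V2 a2 ->
  jointly_continuous_at (filprod V1 V2) (a1, a2) (fun p s => proj1_sig (g p) s).
Proof.
intros hg V1 a1 V2 a2 hV1 ha1 hV2 ha2.
apply jointly_continuous_at_ultra; [apply filprod_filter; apply ultrafilter_filter; auto|].
intros U hU hsub.
destruct (ultrafilter_filprod_proj V1 V2 U hV1 hV2 hU hsub) as [h1 h2].
apply fspace_convE; [apply ultrafilter_filter, hU|].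
apply hg; [exact hU | split; simpl; [rewrite h1 | rewrite h2]; assumption].
Qed.

Lemma fspace_conv_push_prod {B1 B2 C : Type} {S T : topspace} (W : setsys (B1 * B2))
    (b1 : B1) (b2 : B2) (h : B1 * B2 -> C) (g : C -> fspace (top_conv S) (top_conv T)) :
  is_filter W ->
  jointly_continuous_at (filprod (push snd W) (push fst W)) (b2, b1)
    (fun p s => proj1_sig (g (h (snd p, fst p))) s) ->
  fspace_conv (top_conv S) (top_conv T) (push g (push h W)) (g (h (b1, b2))).
Proof.
intros hW hj; apply jointly_continuous_at_swap in hj.
apply (jointly_continuous_at_sub _ W) in hj; [|intros P; apply filprod_push_proj, hW].
apply fspace_convE; [apply push_filter, hW|].
apply jointly_continuous_at_pushE; [exact hW|].
revert hj; apply jointly_continuous_at_ext; intros [c1 c2] s; reflexivity.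
Qed.

Lemma pi0_mul_continuous_epi (X : pstop) (m : X * X -> X) :
  continuous (prod_conv (pconv X) (pconv X)) (pconv X) m ->
  continuous (prod_conv (pi0epi_conv X) (pi0epi_conv X)) (pi0epi_conv X) (pi0_mul X m).
Proof.
intros hm W [C D] hW [hC hD] c _ [J [Y [Z [f hf]]]] hq; simpl in hC, hD.
apply hf; [apply push_ultrafilter, hW|]; intros j.
set (E := fun (b : pi0 X) (y : Y j) => proj1_sig (f j b) y).
assert (hfj : continuous c (fspace_conv (top_conv (Y j)) (top_conv (Z j))) (f j))
  by (intros U b hU hb; exact (proj1 (hf U b hU) hb j)).
assert (hE0 : forall V1 x1 V2 x2, is_ultrafilter V1 -> pconv X V1 x1 ->
    is_ultrafilter V2 -> pconv X V2 x2 ->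
    jointly_continuous_at (filprod V1 V2) (x1, x2)
      (fun p => E (pi0_mul X m (pcls X (fst p), pcls X (snd p))))).
{ intros V1 x1 V2 x2 hV1 hx1 hV2 hx2.
  apply (jointly_continuous_at_ext _ _ (fun p => E (pcls X (m p))));
    [intros [x y] s; rewrite pi0_mul_pcls; auto|].
  apply (jointly_continuous_filprod (pconv X) (pconv X) (fun p => f j (pcls X (m p))));
    auto.
  apply (continuous_comp _ (pconv X) _ m (fun x => f j (pcls X x))); [exact hm|].
  apply (continuous_comp _ c _ (pcls X) (f j)); assumption. }
assert (hE1 : forall V x U b, is_ultrafilter V -> pconv X V x ->
    is_ultrafilter U -> pi0epi_conv X U b ->
    jointly_continuous_at (filprod V U) (x, b)
      (fun p => E (pi0_mul X m (pcls X (fst p), snd p)))).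
{ intros V x U b hV hx hU hb.
  apply (jointly_continuous_epi_final X (pi0 X) (pconv X) (pcls X) (pconv_principal X)
    (pcls_surj X) X (pconv X)); auto; apply pconv_principal. }
apply fspace_conv_push_prod; [apply ultrafilter_filter, hW|].
apply (jointly_continuous_epi_final X (pi0 X) (pconv X) (pcls X) (pconv_principal X)
  (pcls_surj X) (pi0 X) (pi0epi_conv X));
  try apply push_ultrafilter; auto.
- intros b c' hc' _ _; apply hc'.
- intros V1 b1 V2 x2 hV1 hb1 hV2 hx2.
  exact (jointly_continuous_at_swap V2 V1 x2 b1
    (fun p => E (pi0_mul X m (pcls X (fst p), snd p))) (hE1 V2 x2 V1 b1 hV2 hx2 hV1 hb1)).
Qed.

Theorem proposition4p7 :
  (forall (X : pstop) (m : X * X -> X),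
     continuous (prod_conv (pconv X) (pconv X)) (pconv X) m ->
     exists mu : pi0 X * pi0 X -> pi0 X,
       (forall x y : X, mu (pcls X x, pcls X y) = pcls X (m (x, y))) /\
       continuous (prod_conv (pi0ps_conv X) (pi0ps_conv X)) (pi0ps_conv X) mu)
  /\
  (forall (X : pstop) (m : X * X -> X),
     is_epi (pconv X) ->
     continuous (prod_conv (pconv X) (pconv X)) (pconv X) m ->
     exists mu : pi0 X * pi0 X -> pi0 X,
       (forall x y : X, mu (pcls X x, pcls X y) = pcls X (m (x, y))) /\
       continuous (prod_conv (pi0epi_conv X) (pi0epi_conv X)) (pi0epi_conv X) mu).
Proof.
split.
- intros X m hm; exists (pi0_mul X m).
  split; [apply pi0_mul_pcls, hm | apply pi0_mul_continuous_ps, hm].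
- intros X m _ hm; exists (pi0_mul X m).
  split; [apply pi0_mul_pcls, hm | apply pi0_mul_continuous_epi, hm].
Qed.
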